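(* Consider $n\ge2$ agents in $\mathbb{R}^d$ ($d\ge2$) with positions $p_i(t)$, an undirected graph $\mathcal{G}=(\mathcal{V},\mathcal{E})$, constant desired bearings $\{g_{ij}^*\}_{(i,j)\in\mathcal{E}}$, leaders $\mathcal{V}_\ell=\{1,\dots,n_\ell\}$ and followers $\mathcal{V}_f=\{n_\ell+1,\dots,n\}$. The leaders move with a constant velocity: $\dot p_i(t)=\mathbf{v}_i^*$ for $i\in\mathcal{V}_\ell$, and $\mathbf{v}_\ell^*=[(\mathbf{v}_1^* )^T,\dots,(\mathbf{v}_{n_\ell}^* )^T]^T$ is constant. The followers obey, for $i\in\mathcal{V}_f$, $$\dot p_i=-k_P\sum_{j\in\mathcal{N}_i}P_{g_{ij}^*}(p_i-p_j)-k_I\xi_i,\qquad \dot\xi_i=\sum_{j\in\mathcal{N}_i}P_{g_{ij}^*}(p_i-p_j),$$ with constants $k_P,k_I>0$ and arbitrary initial conditions. Suppose the standing assumption below holds. Let $\delta(t)=p_f(t)-p_f^*(t)$ with $p_f^*(t)=-\mathcal{L}_{ff}^{-1}\mathcal{L}_{f\ell}p_\ell(t)$ and $\xi=[\xi_{n_\ell+1}^T,\dots,\xi_n^T]^T$. Then $\delta(t)$ and $\xi(t)$ converge globally and exponentially to $\delta(\infty)=0$ and $\xi(\infty)=\mathcal{L}_{ff}^{-1}\mathcal{L}_{f\ell}\mathbf{v}_\ell^*/k_I$ respectively. Consequently, as $t\to\infty$, $p_f(t)-p_f^*(t)\to0$ where $p_f^*(t)=-\mathcal{L}_{ff}^{-1}\mathcal{L}_{f\ell}p_\ell(t)$,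 and $\dot p_f(t)\to -\mathcal{L}_{ff}^{-1}\mathcal{L}_{f\ell}\mathbf{v}_\ell^*$.
   Context: $P_x=I_d-\frac{xx^T}{\|x\|^2}$ for nonzero $x$; $\mathcal{N}_i$ is the neighbor set of $i$ in $\mathcal{G}$. $p_\ell=[p_1^T,\dots,p_{n_\ell}^T]^T$, $p_f=[p_{n_\ell+1}^T,\dots,p_n^T]^T$. The bearing Laplacian $\mathcal{L}\in\mathbb{R}^{dn\times dn}$ has $(i,j)$-th $d\times d$ block $0$ if $i\ne j,(i,j)\notin\mathcal{E}$; $-P_{g_{ij}^*}$ if $i\ne j,(i,j)\in\mathcal{E}$; $\sum_{k\in\mathcal{N}_i}P_{g_{ik}^*}$ if $i=j$; it is partitioned as $\begin{bmatrix}\mathcal{L}_{\ell\ell}&\mathcal{L}_{\ell f}\\ \mathcal{L}_{f\ell}&\mathcal{L}_{ff}\end{bmatrix}$ according to leaders/followers. Infinitesimal bearing rigidity of a configuration $q\in\mathbb{R}^{dn}$ (no two points coinciding): orient each edge, let $g_k=(q_j-q_i)/\|q_j-q_i\|$ for the $k$-th oriented edge, $F_B(q)=[g_1^T,\dots,g_m^T]^T$, $R_B(q)=\partial F_B/\partial q$; $\mathcal{G}(q)$ is infinitesimally bearing rigid if $\mathrm{Null}(R_B(q))=\mathrm{span}\{\mathbf{1}_n\otimes I_d,q\}$. Target formation: for each $t$, $p^*(t)\in\mathbb{R}^{dn}$ with $p_i^*(t)=p_i(t)$ for $i\in\mathcal{V}_\ell$ and $(p_j^*(t)-p_i^*(t))/\|p_j^*(t)-p_i^*(t)\|=g_{ij}^*$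 for all $(i,j)\in\mathcal{E}$. Standing assumption: the target formation exists for all $t$, is infinitesimally bearing rigid, and $n_\ell\ge 2$. Under this assumption $\mathcal{L}_{ff}$ is symmetric positive definite. *)

From HB Require Import structures.
From mathcomp Require Import all_boot all_order all_algebra.
From mathcomp Require Import all_classical all_reals all_analysis.
Set Implicit Arguments. Unset Strict Implicit. Unset Printing Implicit Defensive.
Import Order.TTheory GRing.Theory Num.Theory.
Import numFieldNormedType.Exports.
Local Open Scope ring_scope.

Section Bearing.
Variables (R : realType) (d : nat).

Definition enorm (x : 'rV[R]_d) : R := Num.sqrt (\sum_(k < d) x 0 k ^+ 2).

(* Orthogonal projection P_x = I_d - x x^T / ||x||^2 (x stored as a row,
   so x x^T is written x^T *m x). *)
Definition Pproj (x : 'rV[R]_d) : 'M[R]_d :=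
  1%:M - (enorm x ^+ 2)^-1 *: (x^T *m x).

Definition bearing_of n (q : 'M[R]_(n, d)) (i j : 'I_n) : 'rV[R]_d :=
  (enorm (row j q - row i q))^-1 *: (row j q - row i q).

Definition bLblock n (E : rel 'I_n) (g : 'I_n -> 'I_n -> 'rV[R]_d)
  (i j : 'I_n) : 'M[R]_d :=
  if i == j then \sum_(k | E i k) Pproj (g i k)
  else if E i j then - Pproj (g i j) else 0.

(* Assemble an (m*d) x (k*d) matrix from d x d blocks; entry index
   mxvec_index i a corresponds to coordinate a of agent i. *)
Definition blockmx m k (B : 'I_m -> 'I_k -> 'M[R]_d) : 'M[R]_(m * d, k * d) :=
  \matrix_(r, c) \sum_(i < m) \sum_(a < d) \sum_(j < k) \sum_(b < d)
     ((r == mxvec_index i a) && (c == mxvec_index j b))%:R * B i j a b.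

Definition stack m (x : 'I_m -> 'rV[R]_d) : 'cV[R]_(m * d) :=
  (mxvec (\matrix_(i < m) x i))^T.

(* Blocks of the bearing Laplacian: leaders are 'I_nl (first), followers
   are 'I_nf (last), n = nl + nf. *)
Definition Lff nl nf (E : rel 'I_(nl + nf)) g : 'M[R]_(nf * d, nf * d) :=
  blockmx (fun i j : 'I_nf => bLblock E g (rshift nl i) (rshift nl j)).
Definition Lfl nl nf (E : rel 'I_(nl + nf)) g : 'M[R]_(nf * d, nl * d) :=
  blockmx (fun (i : 'I_nf) (j : 'I_nl) => bLblock E g (rshift nl i) (lshift nf j)).

(* Infinitesimal bearing rigidity of G(q): no two points coincide and
   Null(R_B(q)) = span{1_n (x) I_d, q}, where R_B(q) = dF_B/dq and F_B stacks
   the bearings of the edges oriented as i -> j with i < j.  R_B(q) delta = 0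
   iff every edge-block of the directional derivative of F_B along delta
   vanishes. *)
Definition inf_bearing_rigid n (E : rel 'I_n) (q : 'M[R]_(n, d)) : Prop :=
  (forall i j : 'I_n, i != j -> row i q != row j q) /\
  forall delta : 'M[R]_(n, d),
    (forall i j : 'I_n, E i j -> (i < j)%N ->
        'D_delta (fun q' : 'M[R]_(n, d) => bearing_of q' i j) q = 0)
    <-> exists (a : 'rV[R]_d) (c : R), delta = \matrix_(i < n) a + c *: q.

Definition target_formation nl nf (E : rel 'I_(nl + nf))
  (g : 'I_(nl + nf) -> 'I_(nl + nf) -> 'rV[R]_d) (pl : 'I_nl -> 'rV[R]_d)
  (q : 'M[R]_(nl + nf, d)) : Prop :=
  (forall i : 'I_nl, row (lshift nf i) q = pl i) /\
  (forall i j, E i j -> bearing_of q i j = g i j).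

End Bearing.

From HB Require Import structures.
From mathcomp Require Import all_boot all_order all_algebra.
From mathcomp Require Import all_classical all_reals all_analysis.
From mathcomp Require Import ring lra.
Import Order.TTheory GRing.Theory Num.Theory.
Import numFieldNormedType.Exports.
Local Open Scope classical_set_scope.
Local Open Scope ring_scope.
Set Implicit Arguments. Unset Strict Implicit. Unset Printing Implicit Defensive.

(* With delta = p_f - p_f^* and theta = L_ff^{-1} (xi - xi(oo)), the constant
   leader velocity cancels and the errors obey the linear system
   theta' = delta, delta' = - k_P L_ff delta - k_I L_ff theta.
   L_ff is symmetric positive definite: x^T L_ff x is a sum of squared
   projections P_{g_ij} (x_i - x_j) over the edges, and a motion annihilating
   all of them preserves every bearing to first order, hence (infinitesimal
   rigidity) is a translation plus a scaling, which is zero once it vanishes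
   at two distinct leaders.  The Lyapunov function
   |delta|^2 + 2 eps theta.delta + (k_I + eps k_P) theta^T L_ff theta
   then decays exponentially, and so do delta, theta and the follower
   velocity error k_P L_ff delta + k_I L_ff theta. *)

Section StackedVectors.
Variables (R : realType) (d : nat).

Lemma sum_mxvec_index m n (F : 'I_(m * n) -> R) :
  \sum_k F k = \sum_(i < m) \sum_(j < n) F (mxvec_index i j).
Proof.
rewrite (reindex (uncurry (@mxvec_index m n))) /=; last first.
  by case: (curry_mxvec_bij m n) => h h1 h2; exists h => x _; [exact: h1 | exact: h2].
by rewrite pair_big /=; apply: eq_bigr => -[i j].
Qed.

Lemma eq_mxvec_index m n (i i' : 'I_m) (j j' : 'I_n) :
  (mxvec_index i j == mxvec_index i' j') = (i == i') && (j == j').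
Proof.
apply/eqP/andP => [|[/eqP-> /eqP->]//].
by move/cast_ord_inj/enum_rank_inj => [-> ->].
Qed.

(* Unlike [mxE], this does not also unfold the entries of [Pproj]. *)
Lemma oppmxE m n (A : 'M[R]_(m, n)) i j : (- A) i j = - A i j.
Proof. by rewrite mxE. Qed.

Lemma sum_pred1 (I : finType) (i : I) (F : I -> R) :
  (forall i', i' != i -> F i' = 0) -> \sum_i' F i' = F i.
Proof. by move=> F0; rewrite (bigD1 i) //= big1 ?addr0. Qed.

Lemma blockmxE m k (B : 'I_m -> 'I_k -> 'M[R]_d) i a j b :
  blockmx B (mxvec_index i a) (mxvec_index j b) = B i j a b.
Proof.
rewrite mxE (@sum_pred1 _ i) => [|i']; last first.
  rewrite eq_sym => /negbTE ne; do 3![apply: big1 => ? _].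
  by rewrite eq_mxvec_index ne mul0r.
rewrite (@sum_pred1 _ a) => [|a']; last first.
  rewrite eq_sym => /negbTE ne; do 2![apply: big1 => ? _].
  by rewrite eq_mxvec_index ne andbF mul0r.
rewrite (@sum_pred1 _ j) => [|j']; last first.
  rewrite eq_sym => /negbTE ne; apply: big1 => ? _.
  by rewrite !eq_mxvec_index ne andbF mul0r.
rewrite (@sum_pred1 _ b) => [|b']; last first.
  by rewrite eq_sym => /negbTE ne; rewrite !eq_mxvec_index ne !andbF mul0r.
by rewrite !eq_mxvec_index !eqxx mul1r.
Qed.

Lemma stackE m (x : 'I_m -> 'rV[R]_d) i a : stack x (mxvec_index i a) 0 = x i 0 a.
Proof. by rewrite /stack mxE mxvecE mxE. Qed.

Lemma stack_rowK m (x : 'cV[R]_(m * d)) :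
  x = stack (fun i => \row_a x (mxvec_index i a) 0).
Proof.
by apply/matrixP => r c; case/mxvec_indexP: r => i a; rewrite ord1 stackE mxE.
Qed.

Lemma stackB m (a b : R) (u w : 'I_m -> 'rV[R]_d) :
  stack (fun i => a *: u i - b *: w i) = a *: stack u - b *: stack w.
Proof.
apply/matrixP => r c; case/mxvec_indexP: r => i k.
by rewrite ord1 !mxE !mxvecE !mxE.
Qed.

Lemma mul_blockmx_stack m k (B : 'I_m -> 'I_k -> 'M[R]_d) (y : 'I_k -> 'rV[R]_d) i a :
  (blockmx B *m stack y) (mxvec_index i a) 0 = \sum_j \sum_b B i j a b * y j 0 b.
Proof.
rewrite mxE sum_mxvec_index; apply: eq_bigr => j _; apply: eq_bigr => b _.
by rewrite blockmxE stackE.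
Qed.

End StackedVectors.

Section Bearings.
Variables (R : realType) (d : nat).
Implicit Types (x : 'rV[R]_d).

Lemma PprojE x i j :
  Pproj x i j = (i == j)%:R - (enorm x ^+ 2)^-1 * (x 0 i * x 0 j).
Proof. by rewrite /Pproj !mxE big_ord1 !mxE. Qed.

Lemma Pproj_sym x i j : Pproj x i j = Pproj x j i.
Proof. by rewrite !PprojE eq_sym [x 0 i * _]mulrC. Qed.

Lemma trmx_Pproj x : (Pproj x)^T = Pproj x.
Proof. by apply/matrixP => i j; rewrite mxE Pproj_sym. Qed.

Lemma enorm_ge0 x : 0 <= enorm x.
Proof. exact: sqrtr_ge0. Qed.

Lemma enorm_sqr x : enorm x ^+ 2 = \sum_k x 0 k ^+ 2.
Proof. by rewrite sqr_sqrtr // sumr_ge0 // => k _; exact: sqr_ge0. Qed.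

Lemma enormZ (c : R) x : enorm (c *: x) = `|c| * enorm x.
Proof.
rewrite /enorm -sqrtr_sqr -sqrtrM ?sqr_ge0 // mulr_sumr; congr Num.sqrt.
by apply: eq_bigr => k _; rewrite mxE exprMn.
Qed.

Lemma enormN x : enorm (- x) = enorm x.
Proof. by rewrite -scaleN1r enormZ normrN1 mul1r. Qed.

Lemma enorm_gt0 x : x != 0 -> 0 < enorm x.
Proof.
move=> x0; rewrite /enorm sqrtr_gt0 lt_def sumr_ge0 ?andbT => [|k _]; last exact: sqr_ge0.
apply: contra x0; rewrite psumr_eq0 => [/allP x0|k _]; last exact: sqr_ge0.
apply/eqP/rowP => k; rewrite [RHS]mxE.
by have := x0 k (mem_index_enum k); rewrite /= sqrf_eq0 => /eqP.
Qed.

Lemma PprojN x : Pproj (- x) = Pproj x.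
Proof.
rewrite /Pproj; have -> : (- x)^T = - x^T by apply/matrixP => i j; rewrite !mxE.
by rewrite enormN mulNmx mulmxN opprK.
Qed.

Lemma Pproj_idem x : enorm x = 1 -> Pproj x *m Pproj x = Pproj x.
Proof.
move=> x1; have xx : x *m x^T = 1%:M.
  apply/matrixP => i j; rewrite !ord1 !mxE /= -(expr1n _ 2) -x1 enorm_sqr.
  by apply: eq_bigr => k _; rewrite mxE expr2.
rewrite /Pproj x1 expr1n invr1 !scale1r mulmxBl !mulmxBr !mul1mx !mulmx1.
by rewrite !mulmxA -(mulmxA _ x) xx mulmx1 subrr subr0.
Qed.

Lemma enorm_bearing_of n (q : 'M[R]_(n, d)) i j : row i q != row j q ->
  enorm (bearing_of q i j) = 1.
Proof.
move=> qij; have /enorm_gt0 e0 : row j q - row i q != 0 by rewrite subr_eq0 eq_sym.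
by rewrite /bearing_of enormZ ger0_norm ?invr_ge0 ?enorm_ge0 // mulVf ?gt_eqF.
Qed.

Lemma bearing_of_swap n (q : 'M[R]_(n, d)) i j : bearing_of q j i = - bearing_of q i j.
Proof. by rewrite /bearing_of -opprB enormN scalerN. Qed.

(* A displacement whose edge components lie along the bearing only rescales
   the edge vector, so the bearing is locally constant in that direction. *)
Lemma derive_bearing_of_eq0 n (q delta : 'M[R]_(n, d)) (i j : 'I_n) :
  row i q != row j q ->
  (row j delta - row i delta) *m Pproj (bearing_of q i j) = 0 ->
  'D_delta (fun q' : 'M[R]_(n, d) => bearing_of q' i j) q = 0.
Proof.
move=> qij wP0; set G := bearing_of q i j in wP0 *.
have G1 : enorm G = 1 := enorm_bearing_of qij.
set e := row j q - row i q; set w := row j delta - row i delta in wP0.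
have e0 : 0 < enorm e by apply: enorm_gt0; rewrite subr_eq0 eq_sym.
have eG : e = enorm e *: G by rewrite /G /bearing_of scalerA mulfV ?gt_eqF ?scale1r.
set s := (w *m G^T) 0 0.
have wG : w = s *: G.
  apply/eqP; rewrite -subr_eq0 -wP0 /Pproj G1 expr1n invr1 scale1r mulmxBr mulmx1.
  by rewrite mulmxA [w *m G^T]mx11_scalar mul_scalar_mx.
have bearing_const h : 0 < h * s + enorm e -> bearing_of (h *: delta + q) i j = G.
  move=> hs0; rewrite /bearing_of.
  have -> : row j (h *: delta + q) - row i (h *: delta + q) = (h * s + enorm e) *: G.
    rewrite scalerDl -scalerA -wG -eG /w /e; apply/rowP => k; rewrite !mxE; ring.
  by rewrite enormZ G1 mulr1 ger0_norm ?ltW // scalerA mulVf ?gt_eqF ?scale1r.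
have s1 : 0 < `|s| + 1 by rewrite ltr_wpDl.
rewrite /derive; apply: cvg_lim => //; apply: cvg_near_cst; near=> h.
have hs : `|h| < enorm e / (`|s| + 1) by near: h; apply: dnbhs0_lt; rewrite divr_gt0.
rewrite /= bearing_const ?subrr ?scaler0 //.
move: hs; rewrite ltr_pdivlMr // => hs.
have : `|h * s| <= `|h| * (`|s| + 1) by rewrite normrM ler_wpM2l // lerDl.
have : - (h * s) <= `|h * s| by rewrite -normrN ler_norm.
lra.
Unshelve. all: by end_near.
Qed.

End Bearings.

Section DotProduct.
Variables (R : realType) (N : nat).
Implicit Types (x y z : 'cV[R]_N) (A L : 'M[R]_N).

Definition dotv n (x y : 'cV[R]_n) : R := \sum_r x r 0 * y r 0.

Definition mx_sumabs m n (A : 'M[R]_(m, n)) : R := \sum_r \sum_s `|A r s|.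

Lemma mx_sumabs_ge0 m n (A : 'M[R]_(m, n)) : 0 <= mx_sumabs A.
Proof. by apply: sumr_ge0 => r _; apply: sumr_ge0 => s _; exact: normr_ge0. Qed.

Lemma dotvC x y : dotv x y = dotv y x.
Proof. by apply: eq_bigr => r _; rewrite mulrC. Qed.

Lemma dotvDr x y z : dotv x (y + z) = dotv x y + dotv x z.
Proof. by rewrite /dotv -big_split; apply: eq_bigr => r _; rewrite mxE mulrDr. Qed.

Lemma dotvZr x y (c : R) : dotv x (c *: y) = c * dotv x y.
Proof. by rewrite /dotv mulr_sumr; apply: eq_bigr => r _; rewrite mxE mulrCA. Qed.

Lemma dotvNr x y : dotv x (- y) = - dotv x y.
Proof. by rewrite -scaleN1r dotvZr mulN1r. Qed.

Lemma dotvDl x y z : dotv (y + z) x = dotv y x + dotv z x.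
Proof. by rewrite dotvC dotvDr !(dotvC x). Qed.

Lemma dotvZl x y (c : R) : dotv (c *: y) x = c * dotv y x.
Proof. by rewrite dotvC dotvZr dotvC. Qed.

Lemma dotvNl x y : dotv (- y) x = - dotv y x.
Proof. by rewrite dotvC dotvNr dotvC. Qed.

Lemma dotv0r x : dotv x 0 = 0.
Proof. by apply: big1 => r _; rewrite mxE mulr0. Qed.

Lemma dotv_ge0 x : 0 <= dotv x x.
Proof. by apply: sumr_ge0 => r _; rewrite -expr2 sqr_ge0. Qed.

Lemma abs_dotv_le x y : `|2 * dotv x y| <= dotv x x + dotv y y.
Proof.
have := dotv_ge0 (x + y); have := dotv_ge0 (x - y).
rewrite !dotvDl !dotvDr !dotvNl !dotvNr (dotvC y x) ler_norml; lra.
Qed.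

Lemma dotv_mulmx x A y : dotv x (A *m y) = \sum_r \sum_s x r 0 * A r s * y s 0.
Proof.
by apply: eq_bigr => r _; rewrite mxE mulr_sumr; apply: eq_bigr => s _; rewrite mulrA.
Qed.

Lemma dotv_sym L x y : L^T = L -> dotv x (L *m y) = dotv y (L *m x).
Proof.
move=> Ls; have Lrs r s : L r s = L s r by rewrite -[in LHS]Ls mxE.
rewrite !dotv_mulmx exchange_big /=; apply: eq_bigr => r _.
by apply: eq_bigr => s _; rewrite Lrs; ring.
Qed.

Lemma sqr_entry_le_dotv x r : x r 0 ^+ 2 <= dotv x x.
Proof.
rewrite /dotv (bigD1 r) //= expr2 lerDl; apply: sumr_ge0 => s _.
by rewrite -expr2 sqr_ge0.
Qed.

Lemma abs_quad_le A x : `|dotv x (A *m x)| <= mx_sumabs A * dotv x x.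
Proof.
rewrite dotv_mulmx /mx_sumabs mulr_suml; apply: le_trans (ler_norm_sum _ _ _) _.
apply: ler_sum => r _; rewrite mulr_suml; apply: le_trans (ler_norm_sum _ _ _) _.
apply: ler_sum => s _; rewrite !normrM.
have xr := sqr_entry_le_dotv x r; have xs := sqr_entry_le_dotv x s.
rewrite -[x r 0 ^+ 2]real_normK ?num_real // -[x s 0 ^+ 2]real_normK ?num_real // in xr xs.
have : 0 <= (`|x r 0| - `|x s 0|) ^+ 2 by exact: sqr_ge0.
have := normr_ge0 (A r s); nra.
Qed.

Lemma discriminant_le (a b c : R) : 0 <= c ->
  (forall t, 0 <= a + 2 * t * b + t ^+ 2 * c) -> b ^+ 2 <= a * c.
Proof.
move=> c0 H; have a0 : 0 <= a by have := H 0; rewrite mulr0 mul0r expr0n /= mul0r !addr0.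
have [cz|cn0] := eqVneq c 0.
  have [->|bn0] := eqVneq b 0; first by rewrite expr0n /= mulr_ge0.
  have := H (- (a + 1) / (2 * b)); rewrite cz mulr0 addr0.
  have -> : 2 * (- (a + 1) / (2 * b)) * b = - (a + 1) by field; rewrite bn0.
  lra.
have cpos : 0 < c by rewrite lt_def cn0 c0.
have := H (- b / c).
have -> : a + 2 * (- b / c) * b + (- b / c) ^+ 2 * c = a - b ^+ 2 / c by field.
by rewrite subr_ge0 ler_pdivrMr.
Qed.

Definition sym_posdef L := L^T = L /\ forall x, x != 0 -> 0 < dotv x (L *m x).

Lemma sym_posdef_ge0 L x : sym_posdef L -> 0 <= dotv x (L *m x).
Proof.
case=> _ pd; have [->|x0] := eqVneq x 0; first by rewrite mulmx0 dotv0r.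
exact/ltW/pd.
Qed.

Lemma sym_posdef_unitmx L : sym_posdef L -> L \in unitmx.
Proof.
move=> [Ls pd]; rewrite -row_free_unit -kermx_eq0; apply/eqP/row_matrixP => i.
rewrite row0; set u := row i (kermx L); apply: trmx_inj; rewrite trmx0.
have uL : L *m u^T = 0 by rewrite -[L]Ls -trmx_mul /u -row_mul mulmx_ker row0 trmx0.
by apply/eqP/negPn/negP => /pd; rewrite uL dotv0r ltxx.
Qed.

(* With y = L^-1 x, Cauchy-Schwarz for the form of L gives
   |x|^4 <= (x^T L x) (y^T L y), and y^T L y = y.x <= C |x|^2. *)
Lemma sym_posdef_coercive L : sym_posdef L ->
  exists2 m, 0 < m & forall x, m * dotv x x <= dotv x (L *m x).
Proof.
move=> Lpd; have [Ls _] := Lpd; have Lu := sym_posdef_unitmx Lpd.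
set C := mx_sumabs (invmx L); have C0 : 0 <= C := mx_sumabs_ge0 _.
have C1 : 0 < C + 1 by rewrite ltr_wpDl.
exists (C + 1)^-1; first by rewrite invr_gt0.
move=> x; rewrite mulrC ler_pdivrMr // mulrC.
set y := invmx L *m x; have Ly : L *m y = x by rewrite mulmxA mulmxV // mul1mx.
have cauchy_schwarz : dotv x (L *m y) ^+ 2 <= dotv x (L *m x) * dotv y (L *m y).
  apply: discriminant_le; first exact: sym_posdef_ge0.
  move=> t; have := sym_posdef_ge0 (x + t *: y) Lpd.
  rewrite mulmxDr -scalemxAr dotvDl !dotvDr !dotvZl !dotvZr (dotv_sym y x Ls).
  by rewrite expr2; lra.
have yx : dotv y x <= C * dotv x x.
  by rewrite dotvC; apply: le_trans (ler_norm _) (abs_quad_le _ _).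
rewrite Ly in cauchy_schwarz.
have q0 : 0 <= dotv x (L *m x) := sym_posdef_ge0 _ Lpd.
have S0 := dotv_ge0 x.
set S := dotv x x in cauchy_schwarz yx S0 *; set q := dotv x (L *m x) in cauchy_schwarz q0 *.
have [->|Sn0] := eqVneq S 0; first exact/mulr_ge0/q0/ltW.
have Spos : 0 < S by rewrite lt_def Sn0 S0.
have : S * S <= q * C * S.
  by rewrite -expr2 -mulrA (le_trans cauchy_schwarz) // ler_wpM2l // mulrC.
rewrite ler_pM2r //; nra.
Qed.

End DotProduct.

Section BearingLaplacian.
Variables (R : realType) (d : nat).

Definition bearing_error n (E : rel 'I_n) (g : 'I_n -> 'I_n -> 'rV[R]_d)
  (X : 'I_n -> 'rV[R]_d) (I : 'I_n) : 'rV[R]_d :=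
  \sum_(J | E I J) (X I - X J) *m Pproj (g I J).

Definition rquad (w : 'rV[R]_d) (P : 'M[R]_d) : R := \sum_a w 0 a * (w *m P) 0 a.

Lemma bLblock_mul_row n (E : rel 'I_n) g (X : 'I_n -> 'rV[R]_d) I a : ~~ E I I ->
  \sum_J \sum_b bLblock E g I J a b * X J 0 b = bearing_error E g X I 0 a.
Proof.
move=> EII; rewrite /bearing_error summxE (bigD1 I) //= /bLblock eqxx.
have -> : \sum_(J | J != I) \sum_b (if I == J then \sum_(k | E I k) Pproj (g I k)
          else if E I J then - Pproj (g I J) else 0) a b * X J 0 b =
   \sum_(J | E I J) \sum_b - Pproj (g I J) a b * X J 0 b.
  rewrite big_mkcond [RHS]big_mkcond; apply: eq_bigr => J _ /=.
  have [->|neJ] := eqVneq J I; first by rewrite (negbTE EII).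
  case: (E I J) => /=.
    by apply: eq_bigr => b _; rewrite mxE.
  by apply: big1 => b _; rewrite mxE mul0r.
have -> : \sum_b (\sum_(k | E I k) Pproj (g I k)) a b * X I 0 b =
   \sum_(J | E I J) \sum_b Pproj (g I J) a b * X I 0 b.
  by rewrite exchange_big /=; apply: eq_bigr => b _; rewrite summxE mulr_suml.
rewrite -big_split /=; apply: eq_bigr => J _.
rewrite mxE -big_split /=; apply: eq_bigr => b _.
by rewrite (Pproj_sym _ b a) !mxE; ring.
Qed.

Lemma rquad_sumsq (w : 'rV[R]_d) P : P^T = P -> P *m P = P ->
  rquad w P = \sum_a (w *m P) 0 a ^+ 2.
Proof.
move=> Ps PP; have dotr (u v : 'rV[R]_d) : \sum_a u 0 a * v 0 a = (u *m v^T) 0 0.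
  by rewrite mxE; apply: eq_bigr => a _; rewrite mxE.
under [RHS]eq_bigr do rewrite expr2.
by rewrite /rquad !dotr !trmx_mul Ps !mulmxA -(mulmxA w P P) PP.
Qed.

Lemma rquad_ge0 (w : 'rV[R]_d) P : P^T = P -> P *m P = P -> 0 <= rquad w P.
Proof. by move=> Ps PP; rewrite rquad_sumsq //; apply: sumr_ge0 => a _; exact: sqr_ge0. Qed.

Lemma rquad_eq0 (w : 'rV[R]_d) P : P^T = P -> P *m P = P -> rquad w P = 0 -> w *m P = 0.
Proof.
move=> Ps PP; rewrite rquad_sumsq // => /eqP; rewrite psumr_eq0 => [/allP wP0|a _]; last first.
  exact: sqr_ge0.
apply/rowP => a; rewrite [RHS]mxE.
by have := wP0 a (mem_index_enum a); rewrite /= sqrf_eq0 => /eqP.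
Qed.

Lemma sum_edges_sym n (E : rel 'I_n) (t : 'I_n -> 'I_n -> R) :
  (forall I J, E I J = E J I) ->
  2 * \sum_I \sum_(J | E I J) t I J = \sum_I \sum_(J | E I J) (t I J + t J I).
Proof.
move=> Esym; have tC : \sum_I \sum_(J | E I J) t J I = \sum_I \sum_(J | E I J) t I J.
  under eq_bigr do rewrite big_mkcond.
  rewrite exchange_big /=; apply: eq_bigr => I _.
  by rewrite [RHS]big_mkcond; apply: eq_bigr => J _; rewrite Esym.
under [RHS]eq_bigr do rewrite big_split /=.
by rewrite big_split /= tC mulr2n mulrDl mul1r.
Qed.

Variables (nl nf : nat) (E : rel 'I_(nl + nf)) (g : 'I_(nl + nf) -> 'I_(nl + nf) -> 'rV[R]_d).
Hypotheses (Esym : forall I J, E I J = E J I) (Eirr : forall I, ~~ E I I).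

Lemma stack_bearing_error (X : 'I_(nl + nf) -> 'rV[R]_d) :
  stack (fun i => bearing_error E g X (rshift nl i)) =
  Lff E g *m stack (fun i => X (rshift nl i)) + Lfl E g *m stack (fun i => X (lshift nf i)).
Proof.
apply/matrixP => r c; case/mxvec_indexP: r => i a; rewrite ord1.
rewrite stackE mxE /Lff /Lfl !mul_blockmx_stack -bLblock_mul_row //.
by rewrite big_split_ord /= addrC.
Qed.

Definition follower_ext (Xf : 'I_nf -> 'rV[R]_d) (J : 'I_(nl + nf)) : 'rV[R]_d :=
  match fintype.split J with inl _ => 0 | inr i => Xf i end.

Lemma follower_ext_lshift Xf i : follower_ext Xf (lshift nf i) = 0.
Proof. by rewrite /follower_ext (unsplitK (inl _ i)). Qed.

Lemma follower_ext_rshift Xf i : follower_ext Xf (rshift nl i) = Xf i.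
Proof. by rewrite /follower_ext (unsplitK (inr _ i)). Qed.

Variable q : 'M[R]_(nl + nf, d).
Hypotheses (Hg : forall I J, E I J -> bearing_of q I J = g I J)
  (Hrig : inf_bearing_rigid E q).

Lemma edge_distinct I J : E I J -> row I q != row J q.
Proof. by move=> EIJ; apply: Hrig.1; apply: contraNneq (Eirr I) => IJ; rewrite {2}IJ. Qed.

Lemma Pproj_edgeC I J : E I J -> Pproj (g J I) = Pproj (g I J).
Proof.
move=> EIJ; rewrite -(Hg EIJ) -Hg -1?Esym //.
by rewrite bearing_of_swap PprojN.
Qed.

Lemma Pproj_edge_idem I J : E I J -> Pproj (g I J) *m Pproj (g I J) = Pproj (g I J).
Proof. by move=> EIJ; rewrite Pproj_idem // -Hg // enorm_bearing_of // edge_distinct. Qed.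

Lemma rquad_edge_ge0 I J w : E I J -> 0 <= rquad w (Pproj (g I J)).
Proof. by move=> EIJ; rewrite rquad_ge0 ?trmx_Pproj ?Pproj_edge_idem. Qed.

Lemma trmx_Lff : (Lff E g)^T = Lff E g.
Proof.
apply/matrixP => r c; case/mxvec_indexP: r => i a; case/mxvec_indexP: c => j b.
rewrite mxE /Lff !blockmxE /bLblock !(inj_eq (@rshift_inj _ _)) eq_sym.
have [->|ne] := eqVneq i j.
  by rewrite !summxE; apply: eq_bigr => k _; rewrite Pproj_sym.
rewrite Esym; case EE: (E _ _); last by rewrite !mxE.
by rewrite !oppmxE Pproj_sym Pproj_edgeC.
Qed.

(* Every undirected edge appears twice in the double sum, whence the factor 2;
   leaders enter with value 0. *)
Lemma Lff_quad_form (Xf : 'I_nf -> 'rV[R]_d) :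
  2 * dotv (stack Xf) (Lff E g *m stack Xf) =
  \sum_I \sum_(J | E I J) rquad (follower_ext Xf I - follower_ext Xf J) (Pproj (g I J)).
Proof.
set X := follower_ext Xf.
have -> : Lff E g *m stack Xf = stack (fun i => bearing_error E g X (rshift nl i)).
  rewrite stack_bearing_error.
  have -> : stack (fun i => X (lshift nf i)) = 0.
    apply/matrixP => r c; case/mxvec_indexP: r => i a.
    by rewrite ord1 stackE /X follower_ext_lshift !mxE.
  by rewrite mulmx0 addr0; congr (_ *m stack _); apply/funext => i; rewrite /X follower_ext_rshift.
have -> : dotv (stack Xf) (stack (fun i => bearing_error E g X (rshift nl i))) =
    \sum_I \sum_a X I 0 a * bearing_error E g X I 0 a.
  rewrite /dotv sum_mxvec_index [RHS]big_split_ord /= [X in _ = X + _]big1 ?add0r; last first.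
    by move=> i _; apply: big1 => a _; rewrite /X follower_ext_lshift mxE mul0r.
  apply: eq_bigr => i _; apply: eq_bigr => a _.
  by rewrite !stackE /X follower_ext_rshift.
have -> : \sum_I \sum_a X I 0 a * bearing_error E g X I 0 a =
   \sum_I \sum_(J | E I J) \sum_a X I 0 a * ((X I - X J) *m Pproj (g I J)) 0 a.
  apply: eq_bigr => I _; rewrite /bearing_error.
  by under eq_bigr do rewrite summxE mulr_sumr; rewrite exchange_big.
rewrite sum_edges_sym //; apply: eq_bigr => I _; apply: eq_bigr => J EIJ.
rewrite (Pproj_edgeC EIJ) /rquad -big_split /=; apply: eq_bigr => a _.
rewrite -[X J - X I]opprK opprB mulNmx oppmxE.
by set u := ((X I - X J) *m _) 0 a; rewrite !mxE; ring.
Qed.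

Lemma Lff_ge0 x : 0 <= dotv x (Lff E g *m x).
Proof.
rewrite [x]stack_rowK -(pmulr_rge0 _ (ltr0n _ 2)) Lff_quad_form.
by apply: sumr_ge0 => I _; apply: sumr_ge0 => J; exact: rquad_edge_ge0.
Qed.

Lemma Lff_quad_eq0 Xf : dotv (stack Xf) (Lff E g *m stack Xf) = 0 ->
  forall I J, E I J -> (follower_ext Xf I - follower_ext Xf J) *m Pproj (g I J) = 0.
Proof.
move=> x0 I J EIJ; apply: rquad_eq0; rewrite ?trmx_Pproj ?Pproj_edge_idem //.
have := Lff_quad_form Xf; rewrite x0 mulr0 => /esym/eqP.
rewrite psumr_eq0 => [/allP H|I' _]; last first.
  by apply: sumr_ge0 => J'; exact: rquad_edge_ge0.
move: (H I (mem_index_enum I)); rewrite /= psumr_eq0 => [/allP H'|J' /rquad_edge_ge0//].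
by apply/eqP; have := H' J (mem_index_enum J); rewrite /= EIJ.
Qed.

Hypothesis nl2 : (2 <= nl)%N.

(* By rigidity X is a translation plus a scaling of q; vanishing at two
   distinct leaders kills both. *)
Lemma rigid_edge_null (X : 'I_(nl + nf) -> 'rV[R]_d) :
  (forall I J, E I J -> (X I - X J) *m Pproj (g I J) = 0) ->
  (forall i, X (lshift nf i) = 0) -> forall I, X I = 0.
Proof.
move=> XP0 Xl0; set delta := \matrix_(J < nl + nf) X J.
have rowd J : row J delta = X J by rewrite rowK.
have [a [c hd]] : exists a c, delta = \matrix_(i < nl + nf) a + c *: q.
  apply/Hrig.2 => I J EIJ _; apply: derive_bearing_of_eq0; first exact: edge_distinct.
  by rewrite !rowd Hg // -opprB mulNmx XP0 // oppr0.
have Xa J : X J = a + c *: row J q by rewrite -rowd hd; apply/rowP => k; rewrite !mxE.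
set i0 : 'I_nl := Ordinal (ltnW nl2); set i1 : 'I_nl := Ordinal nl2.
have q01 : row (lshift nf i0) q != row (lshift nf i1) q.
  by apply: Hrig.1; rewrite (inj_eq (@lshift_inj _ _)).
have c0 : c = 0.
  have : X (lshift nf i0) - X (lshift nf i1) = c *: (row (lshift nf i0) q - row (lshift nf i1) q).
    by rewrite !Xa scalerBr opprD addrACA subrr add0r.
  by rewrite !Xl0 subrr => /esym/eqP; rewrite scaler_eq0 subr_eq0 (negbTE q01) orbF => /eqP.
have a0 : a = 0 by have := Xl0 i0; rewrite Xa c0 scale0r addr0.
by move=> I; rewrite Xa a0 c0 scale0r addr0.
Qed.

Lemma Lff_sym_posdef : sym_posdef (Lff E g).
Proof.
split; first exact: trmx_Lff.
move=> x x0; rewrite lt_def Lff_ge0 andbT; apply: contra x0 => /eqP.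
rewrite [x]stack_rowK; set Xf := fun i => _ => /Lff_quad_eq0 XP0.
have X0 := rigid_edge_null XP0 (follower_ext_lshift Xf).
apply/eqP/matrixP => r c; case/mxvec_indexP: r => i a.
by rewrite ord1 stackE -(follower_ext_rshift Xf) X0 !mxE.
Qed.

End BearingLaplacian.

Section Derivatives.
Variable R : realType.

Lemma is_derive_entry m n (X : R -> 'M[R]_(m, n)) (X' : 'M[R]_(m, n)) t v i j :
  is_derive t v X X' -> is_derive t v (fun s => X s i j) (X' i j).
Proof.
move=> [dX <-]; have dXij := (derivable_mxP X t v).1 dX.
by apply: DeriveDef; rewrite ?derive_mx ?mxE.
Qed.

Lemma is_derive_mx m n (X : R -> 'M[R]_(m, n)) (X' : 'M[R]_(m, n)) t v :
  (forall i j, is_derive t v (fun s => X s i j) (X' i j)) -> is_derive t v X X'.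
Proof.
move=> dX; have dX' : derivable X t v by apply/derivable_mxP => i j; case: (dX i j).
apply: DeriveDef => //; rewrite derive_mx //; apply/matrixP => i j; rewrite mxE.
by case: (dX i j).
Qed.

Lemma is_derive_dotv N (X Y : R -> 'cV[R]_N) X' Y' t v :
  is_derive t v X X' -> is_derive t v Y Y' ->
  is_derive t v (fun s => dotv (X s) (Y s)) (dotv X' (Y t) + dotv (X t) Y').
Proof.
move=> dX dY; rewrite /dotv -big_split /=.
have := is_derive_sum (fun r => is_deriveM (is_derive_entry r 0 dX) (is_derive_entry r 0 dY)).
rewrite fct_sumE => -[? dv]; apply: DeriveDef => //; rewrite dv.
by apply: eq_bigr => r _; rewrite /GRing.scale /= addrC mulrC [_ * X' r 0]mulrC.
Qed.

Lemma is_derive_mulmx m n (A : 'M[R]_(m, n)) (X : R -> 'cV[R]_n) X' t v :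
  is_derive t v X X' -> is_derive t v (fun s => A *m X s) (A *m X').
Proof.
move=> dX; apply: is_derive_mx => i j; rewrite mxE.
have -> : (fun s => (A *m X s) i j) = \sum_k (fun s => A i k * X s k j).
  by apply/funext => s; rewrite fct_sumE mxE.
by apply: is_derive_sum => k; apply: is_deriveZ; exact: is_derive_entry.
Qed.

Lemma is_derive_stack d m (f : 'I_m -> R -> 'rV[R]_d) (f' : 'I_m -> 'rV[R]_d) t v :
  (forall i, is_derive t v (f i) (f' i)) ->
  is_derive t v (fun s => stack (fun i => f i s)) (stack f').
Proof.
move=> df; apply: is_derive_mx => r c; case/mxvec_indexP: r => i a.
rewrite ord1 stackE; under eq_fun do rewrite stackE.
exact: is_derive_entry.
Qed.

Lemma is_derive_expRM (c t : R) :
  is_derive t 1 (fun s => expR (c * s)) (expR (c * t) * c).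
Proof.
have : is_derive t 1 (fun s : R => c * s) c.
  by have := is_deriveZ c (is_derive_id t 1); rewrite /GRing.scale /= mulr1.
exact: (is_derive1_comp (f := expR) (g := fun s => c * s)).
Qed.

End Derivatives.

Section ExponentialBounds.
Variable R : realType.
Implicit Types (f df : R -> R).

Lemma nonincreasing_of_derive f df (a b : R) : 0 < a -> a <= b ->
  (forall t : R, 0 < t -> is_derive t 1 f (df t)) -> (forall t, 0 < t -> df t <= 0) ->
  f b <= f a.
Proof.
move=> a0 ab Hf df0; have der x : a <= x -> derivable f x 1.
  by move=> ax; case: (Hf x (lt_le_trans a0 ax)).
apply: (@ler0_derive1_le_cc R f a b); rewrite ?in_itv /= ?lexx ?ab //.
- by move=> x /[!in_itv] /andP[ax _]; apply/der/ltW.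
- move=> x /[!in_itv] /andP[ax _]; have x0 := lt_trans a0 ax.
  by rewrite derive1E; have [_ ->] := Hf x x0; rewrite df0.
- by apply: derivable_within_continuous => x /[!in_itv] /andP[ax _]; apply: der.
Qed.

Lemma nondecreasing_of_derive f df (a b : R) : 0 < a -> a <= b ->
  (forall t : R, 0 < t -> is_derive t 1 f (df t)) -> (forall t, 0 < t -> 0 <= df t) ->
  f a <= f b.
Proof.
move=> a0 ab Hf df0; rewrite -lerN2.
apply: (@nonincreasing_of_derive (- f) (fun t => - df t)) => // t t0.
  exact/is_deriveN/Hf.
by rewrite oppr_le0 df0.
Qed.

Lemma is_derive_expR_weight f df (c t : R) : is_derive t 1 f (df t) ->
  is_derive t 1 (fun s => f s * expR (c * s)) ((df t + c * f t) * expR (c * t)).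
Proof.
move=> Hf; have [? dv] := is_deriveM Hf (is_derive_expRM c t).
by apply: DeriveDef => //; rewrite dv /GRing.scale /=; ring.
Qed.

(* The upper inequality gives the decay for t >= 1; the lower one is needed to
   bound f on (0, 1], since nothing is known about f at 0. *)
Lemma exp_bound_of_derive f df (lam Lam : R) : 0 < lam -> 0 <= Lam ->
  (forall t : R, 0 < t -> is_derive t 1 f (df t)) -> (forall t, 0 < t -> 0 <= f t) ->
  (forall t, 0 < t -> df t <= - lam * f t) ->
  (forall t, 0 < t -> - Lam * f t <= df t) ->
  exists K, forall t, 0 < t -> f t <= K * expR (- lam * t).
Proof.
move=> lam0 Lam0 Hf f0 df_up df_lo; have f10 := f0 1 ltr01.
exists (f 1 * expR lam * expR Lam) => t t0.
have e0 := expR_gt0 (- lam * t).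
have eLam : 1 <= expR Lam by rewrite -expR0 ler_expR.
have [t1|t1] := leP 1 t.
  have decay : f t * expR (lam * t) <= f 1 * expR (lam * 1).
    apply: (nonincreasing_of_derive ltr01 t1 (fun s s0 => is_derive_expR_weight lam (Hf s s0))).
    by move=> s s0; rewrite mulr_le0_ge0 ?expR_ge0 //; have := df_up s s0; lra.
  have -> : f t = f t * expR (lam * t) * expR (- lam * t).
    by rewrite -mulrA -expRD mulNr addrN expR0 mulr1.
  rewrite mulr1 in decay; rewrite ler_pM2r //; apply: (le_trans decay).
  by rewrite ler_peMr // mulr_ge0 ?expR_ge0.
have growth : f t * expR (Lam * t) <= f 1 * expR (Lam * 1).
  apply: (nondecreasing_of_derive t0 (ltW t1) (fun s s0 => is_derive_expR_weight Lam (Hf s s0))).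
  by move=> s s0; rewrite mulr_ge0 ?expR_ge0 //; have := df_lo s s0; lra.
have e1 : 1 <= expR (Lam * t) by rewrite -expR0 ler_expR mulr_ge0 // ltW.
have e2 : 1 <= expR lam * expR (- lam * t).
  by rewrite -expRD -expR0 ler_expR mulNr -{1}[lam]mulr1 -mulrBr mulr_ge0 ?subr_ge0 // ltW.
rewrite mulr1 in growth; have ft0 := f0 t t0.
have : f t <= f 1 * expR Lam by apply: le_trans growth; rewrite ler_peMr.
move/le_trans; apply.
have -> : f 1 * expR lam * expR Lam * expR (- lam * t) =
  f 1 * expR Lam * (expR lam * expR (- lam * t)) by ring.
by rewrite ler_peMr ?mulr_ge0 ?expR_ge0.
Qed.

End ExponentialBounds.

Section ExponentialDecay.
Variable R : realType.

Lemma normmx_entry m n (x : 'M[R]_(m, n)) i j : `|x i j| <= `|x|.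
Proof. by rewrite /Num.Def.normr /= mx_normrE; exact: (le_bigmax _ _ (i, j)). Qed.

Lemma normmx_le m n (x : 'M[R]_(m, n)) B : 0 <= B -> (forall i j, `|x i j| <= B) -> `|x| <= B.
Proof. by move=> B0 xB; rewrite /Num.Def.normr /= mx_normrE; apply: bigmax_le => // ij _. Qed.

Lemma normmx_mulmx_le m n (A : 'M[R]_(m, n)) (x : 'cV[R]_n) :
  `|A *m x| <= mx_sumabs A * `|x|.
Proof.
apply: normmx_le => [|r c]; first by rewrite mulr_ge0 ?mx_sumabs_ge0.
rewrite ord1 mxE; apply: le_trans (ler_norm_sum _ _ _) _.
apply: (@le_trans _ _ (\sum_s `|A r s| * `|x|)).
  by apply: ler_sum => s _; rewrite normrM ler_wpM2l ?normmx_entry.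
rewrite -mulr_suml ler_wpM2r // /mx_sumabs (bigD1 r) //= lerDl.
by apply: sumr_ge0 => i _; apply: sumr_ge0 => s _; exact: normr_ge0.
Qed.

Lemma normmx_le_dotv n (x : 'cV[R]_n) B : 0 <= B -> dotv x x <= B ^+ 2 -> `|x| <= B.
Proof.
move=> B0 xB; apply: normmx_le => // r c; rewrite ord1.
have := le_trans (sqr_entry_le_dotv x r) xB; rewrite -real_normK ?num_real //.
by rewrite ler_sqr ?nnegrE.
Qed.

Definition exp_decay (V : normedModType R) (f : R -> V) : Prop :=
  exists M lam : R, 0 < lam /\ forall t, 0 < t -> `|f t| <= M * expR (- lam * t).

Lemma exp_decay_cvg (V : normedModType R) (f : R -> V) (l : V) :
  exp_decay (fun t => f t - l) -> f t @[t --> +oo] --> l.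
Proof.
move=> [M [lam [lam0 fM]]]; apply/cvgrPdist_le => e e0; near=> t.
have tT : `|M| / (e * lam) < t by near: t; apply: nbhs_pinfty_gt; rewrite num_real.
have t0 : 0 < t by apply: le_lt_trans tT; rewrite divr_ge0 // ?mulr_ge0 // ltW.
rewrite distrC; apply: le_trans (fM t t0) _.
have Xexp : expR (- lam * t) * (1 + lam * t) <= 1.
  by rewrite mulNr expRN ler_pdivrMl ?expR_gt0 // mulr1 expR_ge1Dx.
have hM : `|M| < e * (1 + lam * t).
  by move: tT; rewrite ltr_pdivrMr ?mulr_gt0 // => tT; nra.
have := expR_gt0 (- lam * t); have := ler_norm M; nra.
Unshelve. all: by end_near.
Qed.

Lemma exp_decay_bound (V : normedModType R) (f : R -> V) : exp_decay f ->
  exists M lam : R, 0 < lam /\ forall t, 0 <= t -> `|f t| <= M * expR (- lam * t).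
Proof.
move=> [M [lam [lam0 fM]]]; exists (Num.max M `|f 0|), lam; split => // t.
rewrite le_eqVlt => /orP[/eqP <-|t0]; first by rewrite mulr0 expR0 mulr1 le_max lexx orbT.
by apply: le_trans (fM t t0) _; rewrite ler_wpM2r ?expR_ge0 // le_max lexx.
Qed.

Lemma exp_decay_eq (V : normedModType R) (f g : R -> V) :
  (forall t, 0 < t -> f t = g t) -> exp_decay f -> exp_decay g.
Proof. by move=> fg [M [lam [lam0 fM]]]; exists M, lam; split => // t t0; rewrite -fg ?fM. Qed.

Lemma exp_decayD (V : normedModType R) (f g : R -> V) :
  exp_decay f -> exp_decay g -> exp_decay (fun t => f t + g t).
Proof.
move=> [M1 [l1 [l10 fM]]] [M2 [l2 [l20 gM]]].
exists (`|M1| + `|M2|), (Num.min l1 l2); split => [|t t0]; first by rewrite lt_min l10.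
have slower M l : Num.min l1 l2 <= l ->
    M * expR (- l * t) <= `|M| * expR (- Num.min l1 l2 * t).
  move=> ll; apply: le_trans (ler_wpM2r (expR_ge0 _) (ler_norm M)) _.
  by rewrite ler_wpM2l // ler_expR !mulNr lerN2 ler_wpM2r // ltW.
apply: le_trans (ler_normD _ _) _; rewrite mulrDl.
by apply: lerD; [apply: le_trans (fM t t0) (slower _ _ _)
                | apply: le_trans (gM t t0) (slower _ _ _)]; rewrite ge_min lexx ?orbT.
Qed.

Lemma exp_decay_mulmx m n (A : 'M[R]_(m, n)) (x : R -> 'cV[R]_n) :
  exp_decay x -> exp_decay (fun t => A *m x t).
Proof.
move=> [M [lam [lam0 xM]]]; exists (mx_sumabs A * M), lam; split => // t t0.
by rewrite -mulrA (le_trans (normmx_mulmx_le _ _)) // ler_wpM2l ?mx_sumabs_ge0 ?xM.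
Qed.

Lemma exp_decay_of_dotv n (x : R -> 'cV[R]_n) (K lam : R) : 0 < lam ->
  (forall t, 0 < t -> dotv (x t) (x t) <= K * expR (- lam * t)) -> exp_decay x.
Proof.
move=> lam0 xK; exists (Num.sqrt K), (lam / 2); split => [|t t0]; first by rewrite divr_gt0.
have K0 : 0 <= K.
  by have := le_trans (dotv_ge0 _) (xK t t0); rewrite pmulr_lge0 ?expR_gt0.
apply: normmx_le_dotv; first by rewrite mulr_ge0 ?sqrtr_ge0 ?expR_ge0.
rewrite exprMn sqr_sqrtr // expr2 -expRD.
have -> : - (lam / 2) * t + - (lam / 2) * t = - lam * t by field.
exact: xK.
Qed.

End ExponentialDecay.

Section PIErrorLyapunov.
Variables (R : realType) (N : nat) (L : 'M[R]_N) (m kP kI : R) (th de : R -> 'cV[R]_N).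
Hypotheses (Ls : L^T = L) (m0 : 0 < m) (Lcoer : forall x, m * dotv x x <= dotv x (L *m x))
  (kP0 : 0 < kP) (kI0 : 0 < kI)
  (th' : forall t : R, 0 < t -> is_derive t 1 th (de t))
  (de' : forall t : R, 0 < t -> is_derive t 1 de (- kP *: (L *m de t) - kI *: (L *m th t))).

Let eps := Num.min (1 / 2) (Num.min (m * kI / 2) (m * kP / 2)).

Let eps_gt0 : 0 < eps.
Proof. by rewrite !lt_min !divr_gt0 ?mulr_gt0 ?ltr01 ?ltr0n. Qed.

Let eps_le : [/\ eps <= 1 / 2, eps <= m * kI / 2 & eps <= m * kP / 2].
Proof. by rewrite !ge_min !lexx !orbT. Qed.

Let a s := dotv (de s) (de s).
Let b s := dotv (th s) (L *m th s).

Let b_coercive s : m * dotv (th s) (th s) <= b s.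
Proof. exact: Lcoer. Qed.

Let b_ge0 s : 0 <= b s.
Proof. by apply: le_trans (b_coercive s); rewrite mulr_ge0 ?dotv_ge0 // ltW. Qed.

(* The Lyapunov function of the damped system th'' = -kP L th' - kI L th,
   with a small cross term eps th.th' that makes its derivative definite. *)
Let V s := a s + 2 * eps * dotv (th s) (de s) + (kI + eps * kP) * b s.
Let V' s := - 2 * kP * dotv (de s) (L *m de s) + 2 * eps * a s - 2 * eps * kI * b s.

Let is_derive_V (t : R) : 0 < t -> is_derive t 1 V (V' t).
Proof.
move=> t0; have dA := is_derive_dotv (de' t0) (de' t0).
have dE := is_derive_dotv (th' t0) (de' t0).
have dB := is_derive_dotv (th' t0) (is_derive_mulmx L (th' t0)).
have [? dv] :=
  is_deriveD (is_deriveD dA (is_deriveZ (2 * eps) dE)) (is_deriveZ (kI + eps * kP) dB).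
apply: DeriveDef => //; rewrite dv /V' /a /b /GRing.scale /=.
rewrite !dotvDl !dotvDr !dotvZl !dotvZr !dotvNl !dotvNr !dotvZl !dotvZr.
by rewrite (dotvC (L *m de t)) (dotvC (L *m th t)) (dotv_sym (de t) (th t) Ls); ring.
Qed.

Let V_ge s : a s / 2 + kI / 2 * b s <= V s.
Proof.
have [e1 e2 _] := eps_le; have := abs_dotv_le (th s) (de s); rewrite ler_norml => /andP[cr _].
have a0 : 0 <= a s := dotv_ge0 _; have k0 := dotv_ge0 (th s); have eps0 := ltW eps_gt0.
have := ler_wpM2l eps0 cr; have := ler_wpM2r a0 e1; have := ler_wpM2r k0 e2.
have := ler_wpM2l (divr_ge0 (ltW kI0) (ler0n R 2)) (b_coercive s).
have := mulr_ge0 (mulr_ge0 (ltW eps_gt0) (ltW kP0)) (b_ge0 s).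
rewrite /V -/(a s) => *; nra.
Qed.

Let V_le s : V s <= 3 / 2 * a s + (3 / 2 * kI + eps * kP) * b s.
Proof.
have [e1 e2 _] := eps_le; have := abs_dotv_le (th s) (de s); rewrite ler_norml => /andP[_ cr].
have a0 : 0 <= a s := dotv_ge0 _; have k0 := dotv_ge0 (th s); have eps0 := ltW eps_gt0.
have := ler_wpM2l eps0 cr; have := ler_wpM2r a0 e1; have := ler_wpM2r k0 e2.
have := ler_wpM2l (divr_ge0 (ltW kI0) (ler0n R 2)) (b_coercive s).
rewrite /V -/(a s) => *; nra.
Qed.

Let V'_le s : V' s <= - (kP * m) * a s - 2 * eps * kI * b s.
Proof.
have [_ _ e3] := eps_le; have a0 : 0 <= a s := dotv_ge0 _.
have := ler_wpM2l (ltW kP0) (Lcoer (de s)); have := ler_wpM2r a0 e3.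
rewrite /V' -/(a s) => *; nra.
Qed.

Let V'_ge s : - 2 * kP * mx_sumabs L * a s - 2 * eps * kI * b s <= V' s.
Proof.
have a0 : 0 <= a s := dotv_ge0 _.
have := ler_wpM2l (ltW kP0) (le_trans (ler_norm _) (abs_quad_le L (de s))).
have := mulr_ge0 (ltW eps_gt0) a0.
rewrite /V' -/(a s) => *; nra.
Qed.

Let V_exp_bound : exists2 lam, 0 < lam & exists K, forall t, 0 < t -> V t <= K * expR (- lam * t).
Proof.
set C := 3 / 2 * kI + eps * kP; have C0 : 0 < C by rewrite ltr_pwDl ?mulr_ge0 ?ltW // mulr_gt0.
set lam := Num.min (2 * kP * m / 3) (2 * eps * kI / C).
have lam0 : 0 < lam by rewrite lt_min !divr_gt0 ?mulr_gt0.
have lam1 : lam * (3 / 2) <= kP * m.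
  rewrite -ler_pdivlMr ?divr_gt0 // ge_min; apply/orP; left.
  by rewrite le_eqVlt; apply/orP; left; apply/eqP; field.
have lam2 : lam * C <= 2 * eps * kI by rewrite -ler_pdivlMr // ge_min lexx orbT.
set Lam := 4 * kP * mx_sumabs L + 4 * eps.
have Lam0 : 0 <= Lam by rewrite addr_ge0 ?mulr_ge0 ?mx_sumabs_ge0 // ltW.
exists lam => //; apply: (exp_bound_of_derive lam0 Lam0 is_derive_V) => s _;
  have := b_ge0 s; have := dotv_ge0 (de s); rewrite -/(a s).
- by move=> a0 b0; have := V_ge s; have := mulr_ge0 (ltW kI0) b0; nra.
- move=> a0 b0; have := V'_le s; have := ler_wpM2l (ltW lam0) (V_le s).
  have := ler_wpM2r a0 lam1; have := ler_wpM2r b0 lam2; rewrite -/C; nra.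
- move=> a0 b0; have := V'_ge s; have := ler_wpM2l Lam0 (V_ge s).
  have := mulr_ge0 (ltW eps_gt0) a0.
  have := mulr_ge0 (mulr_ge0 (mulr_ge0 (ltW kP0) (mx_sumabs_ge0 L)) (ltW kI0)) b0.
  rewrite /Lam; nra.
Qed.

Lemma pi_error_exp_decay : exp_decay de /\ exp_decay th.
Proof.
have [lam lam0 [K VK]] := V_exp_bound.
have kIb t : 0 <= kI / 2 * b t by rewrite mulr_ge0 ?b_ge0 ?divr_ge0 ?ltW.
split.
  apply: (@exp_decay_of_dotv _ _ _ (2 * K) lam) => // t t0.
  by have := VK t t0; have := V_ge t; have := kIb t; rewrite -/(a t); lra.
apply: (@exp_decay_of_dotv _ _ _ (2 * K / (kI * m)) lam) => // t t0.
rewrite mulrAC ler_pdivlMr ?mulr_gt0 //.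
have := ler_wpM2l (divr_ge0 (ltW kI0) (ler0n R 2)) (b_coercive t).
have := VK t t0; have := V_ge t; have := dotv_ge0 (de t); rewrite -/(a t); nra.
Qed.

End PIErrorLyapunov.

Section PITracking.
Variables (R : realType) (n k : nat) (L : 'M[R]_n) (B : 'M[R]_(n, k)) (kP kI : R).
Variables (vl : 'cV[R]_k) (pl : R -> 'cV[R]_k) (pf xf : R -> 'cV[R]_n).
Hypotheses (Lpd : sym_posdef L) (kP0 : 0 < kP) (kI0 : 0 < kI)
  (pl' : forall t : R, 0 < t -> is_derive t 1 pl vl)
  (pf' : forall t : R, 0 < t -> is_derive t 1 pf (- kP *: (L *m pf t + B *m pl t) - kI *: xf t))
  (xf' : forall t : R, 0 < t -> is_derive t 1 xf (L *m pf t + B *m pl t)).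

Lemma pi_tracking (pfstar := fun t => - (invmx L *m B *m pl t))
    (delta := fun t => pf t - pfstar t) (xinf := kI^-1 *: (invmx L *m B *m vl)) :
  (exists M lam : R, 0 < lam /\
     forall t : R, 0 <= t -> `|delta t| <= M * expR (- lam * t)) /\
  (exists M lam : R, 0 < lam /\
     forall t : R, 0 <= t -> `|xf t - xinf| <= M * expR (- lam * t)) /\
  (delta t @[t --> +oo] --> (0 : 'cV[R]_n)) /\
  (xf t @[t --> +oo] --> xinf) /\
  ((- kP *: (L *m pf t + B *m pl t) - kI *: xf t) @[t --> +oo]
     --> - (invmx L *m B *m vl)).
Proof.
have Lu := sym_posdef_unitmx Lpd; have [m m0 Lcoer] := sym_posdef_coercive Lpd.
pose theta t := invmx L *m (xf t - xinf).
have L_delta t : L *m delta t = L *m pf t + B *m pl t.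
  by rewrite /delta /pfstar opprK mulmxDr !mulmxA mulmxV // mul1mx.
have L_theta t : L *m theta t = xf t - xinf by rewrite mulmxA mulmxV // mul1mx.
have theta' (t : R) : 0 < t -> is_derive t 1 theta (delta t).
  move=> t0; have [? dv] :=
    is_derive_mulmx (invmx L) (is_deriveB (xf' t0) (is_derive_cst xinf t 1)).
  by apply: DeriveDef => //; rewrite dv subr0 -L_delta mulmxA mulVmx // mul1mx.
have delta' (t : R) : 0 < t ->
    is_derive t 1 delta (- kP *: (L *m delta t) - kI *: (L *m theta t)).
  move=> t0; have [? dv] :=
    is_deriveB (pf' t0) (is_deriveN (is_derive_mulmx (invmx L *m B) (pl' t0))).
  apply: DeriveDef => //; rewrite dv L_delta L_theta /xinf scalerBr scalerA mulfV ?gt_eqF //.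
  by rewrite scale1r opprK opprB addrA addrAC.
have [de_decay th_decay] := pi_error_exp_decay Lpd.1 m0 Lcoer kP0 kI0 theta' delta'.
have xf_decay : exp_decay (fun t => xf t - xinf).
  by apply: exp_decay_eq (exp_decay_mulmx L th_decay) => t _.
have vel_decay : exp_decay (fun t =>
    (- kP *: (L *m pf t + B *m pl t) - kI *: xf t) - - (invmx L *m B *m vl)).
  apply: exp_decay_eq (exp_decayD (exp_decay_mulmx (- kP *: L) de_decay)
                                  (exp_decay_mulmx (- kI *: L) th_decay)) => t _.
  rewrite -!scalemxAl L_delta L_theta (scaleNr kI) /xinf scalerBr scalerA mulfV ?gt_eqF //.
  by rewrite scale1r opprB opprK addrA addrAC.
do 2?split; try exact: exp_decay_bound.
split; last by split; apply: exp_decay_cvg.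
by apply: exp_decay_cvg; apply: exp_decay_eq de_decay => t _; rewrite subr0.
Qed.

End PITracking.

Unset Implicit Arguments.
Set Strict Implicit.

Theorem theorem2 (R : realType) (d nl nf : nat)
  (E : rel 'I_(nl + nf)) (g : 'I_(nl + nf) -> 'I_(nl + nf) -> 'rV[R]_d)
  (kP kI : R) (v : 'I_nl -> 'rV[R]_d)
  (p : 'I_(nl + nf) -> R -> 'rV[R]_d) (xi : 'I_nf -> R -> 'rV[R]_d) :
  (2 <= d)%N -> (2 <= nl)%N ->
  (forall i j, E i j = E j i) -> (forall i, ~~ E i i) ->
  0 < kP -> 0 < kI ->
  (* leaders: constant velocity *)
  (forall (i : 'I_nl) (t : R), 0 < t -> is_derive t 1 (p (lshift nf i)) (v i)) ->
  (* followers: PI bearing control law *)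
  (forall (i : 'I_nf) (t : R), 0 < t ->
     is_derive t 1 (p (rshift nl i))
       (- kP *: (\sum_(j | E (rshift nl i) j)
                   ((p (rshift nl i) t - p j t) *m Pproj (g (rshift nl i) j)))
        - kI *: xi i t)) ->
  (forall (i : 'I_nf) (t : R), 0 < t ->
     is_derive t 1 (xi i)
       (\sum_(j | E (rshift nl i) j)
          ((p (rshift nl i) t - p j t) *m Pproj (g (rshift nl i) j)))) ->
  (* standing assumption: target formation exists and is inf. bearing rigid *)
  (forall t : R, 0 <= t -> exists q : 'M[R]_(nl + nf, d),
     target_formation E g (fun i => p (lshift nf i) t) q /\
     inf_bearing_rigid E q) ->
  let pl := fun t : R => stack (fun i : 'I_nl => p (lshift nf i) t) in
  let pf := fun t : R => stack (fun i : 'I_nf => p (rshift nl i) t) in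
  let xf := fun t : R => stack (fun i : 'I_nf => xi i t) in
  let pfstar := fun t : R => - (invmx (Lff E g) *m Lfl E g *m pl t) in
  let delta := fun t : R => (pf t - pfstar t : 'cV[R]_(nf * d)) in
  let xinf := kI^-1 *: (invmx (Lff E g) *m Lfl E g *m stack v) in
  (exists M lam : R, 0 < lam /\
     forall t : R, 0 <= t -> `|delta t| <= M * expR (- lam * t)) /\
  (exists M lam : R, 0 < lam /\
     forall t : R, 0 <= t -> `|xf t - xinf| <= M * expR (- lam * t)) /\
  (delta t @[t --> +oo] --> (0 : 'cV[R]_(nf * d))) /\
  (xf t @[t --> +oo] --> xinf) /\
  (stack (fun i : 'I_nf => 'D_1 (p (rshift nl i)) t) @[t --> +oo]
     --> - (invmx (Lff E g) *m Lfl E g *m stack v)).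
Proof.
move=> _ nl2 Esym Eirr kP0 kI0 leader' follower' xi' target pl pf xf pfstar delta xinf.
have [q [[_ qg] qrigid]] := target 0 (lexx 0).
have Lpd := Lff_sym_posdef Esym Eirr qg qrigid nl2.
have control t : stack (fun i => bearing_error E g (p^~ t) (rshift nl i)) =
    Lff E g *m pf t + Lfl E g *m pl t by exact: stack_bearing_error.
have pl' (t : R) : 0 < t -> is_derive t 1 pl (stack v).
  by move=> t0; apply: is_derive_stack => i; exact: leader'.
have pf' (t : R) : 0 < t ->
    is_derive t 1 pf (- kP *: (Lff E g *m pf t + Lfl E g *m pl t) - kI *: xf t).
  by move=> t0; rewrite -control -stackB; apply: is_derive_stack => i; exact: follower'.
have xf' (t : R) : 0 < t -> is_derive t 1 xf (Lff E g *m pf t + Lfl E g *m pl t).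
  by move=> t0; rewrite -control; apply: is_derive_stack => i; exact: xi'.
have [delta_bound [xf_bound [delta_cvg [xf_cvg vel_cvg]]]] := pi_tracking Lpd kP0 kI0 pl' pf' xf'.
do 4!split => //; apply: cvg_trans vel_cvg; apply: near_eq_cvg; near=> t.
have t0 : 0 < t by near: t; apply: nbhs_pinfty_gt; rewrite num_real.
rewrite -control -stackB; congr stack; apply/funext => i.
by have [_ ->] := follower' i t t0.
Unshelve. all: by end_near.
Qed.
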